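(* For every $N\ge2$, every unistochastic $N\times N$ matrix $B=V\odot\overline{V}$ ($V\in U(N)$) arises as the hyper-decoherence of some unistochastic channel: there exists $U\in U(N^2)$ with $B=\mathcal{D}_h(\Psi_U)$. That is, $\mathcal{U}_N^C\subseteq\mathcal{D}_h(\mathcal{U}_N^Q)$.
   Context: $\odot$ is the entrywise (Hadamard) product; $\mathcal{U}_N^C=\{V\odot\overline{V}:V\in U(N)\}$. For $U\in U(N^2)$ acting on $\mathbb{C}^N\otimes\mathbb{C}^N_E$, the unistochastic channel is $\Psi_U(\rho)=\mathrm{Tr}_E[U(\rho\otimes\mathbb{I}_N/N)U^\dagger]$, and $\mathcal{U}_N^Q=\{\Psi_U:U\in U(N^2)\}$. Hyper-decoherence of a channel $\Phi$ is the $N\times N$ matrix $\mathcal{D}_h(\Phi)_{ij}=\mathrm{Tr}[|i\rangle\langle i|\,\Phi(|j\rangle\langle j|)]$. *)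

From HB Require Import structures.
From mathcomp Require Import all_boot all_order all_algebra.
From mathcomp Require Export spectral.
From mathcomp Require mxtens.
Set Implicit Arguments. Unset Strict Implicit. Unset Printing Implicit Defensive.
Import Order.TTheory GRing.Theory Num.Theory.
Local Open Scope ring_scope.

Definition dagger {C : numClosedFieldType} m n (A : 'M[C]_(m, n)) : 'M[C]_(n, m) :=
  map_mx Num.conj (trmx A).

(* C^N (x) C^N_E is identified with C^(N*N); the Kronecker product
   mxtens.tensmx A B has basis index  mxtens_index (i, e) = i*N + e,
   i.e. system factor first, environment factor second. *)
Definition kron {C : numClosedFieldType} N (A B : 'M[C]_N) : 'M[C]_(N * N) :=
  mxtens.tensmx A B.

Definition ptraceE {C : numClosedFieldType} N (M : 'M[C]_(N * N)) : 'M[C]_N :=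
  \matrix_(i, j) \sum_(e < N)
     M (mxtens.mxtens_index (i, e)) (mxtens.mxtens_index (j, e)).

Definition unistoch_channel {C : numClosedFieldType} N (U : 'M[C]_(N * N))
    (rho : 'M[C]_N) : 'M[C]_N :=
  ptraceE (U *m kron rho ((N%:R)^-1 *: 1%:M) *m dagger U).

Definition proj_ket {C : numClosedFieldType} N (i : 'I_N) : 'M[C]_N := delta_mx i i.

Definition hyperdec {C : numClosedFieldType} N (Phi : 'M[C]_N -> 'M[C]_N) : 'M[C]_N :=
  \matrix_(i, j) \tr (proj_ket i *m Phi (proj_ket j)).

Definition unistoch_mx {C : numClosedFieldType} N (V : 'M[C]_N) : 'M[C]_N :=
  \matrix_(i, j) (V i j * Num.conj (V i j)).

From mathcomp Require Import all_boot all_order all_algebra.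
From mathcomp Require Import spectral.
From mathcomp Require mxtens.
Set Implicit Arguments. Unset Strict Implicit. Unset Printing Implicit Defensive.
Import GRing.Theory Num.Theory.
Local Open Scope ring_scope.

(* No coupling to the environment is needed: take U = V (x) I.  Then
   U (rho (x) I/N) U^dagger = (V rho V^dagger) (x) I/N, whose partial trace over
   the environment is V rho V^dagger, and the diagonal entry i of
   V |j><j| V^dagger is |V_ij|^2. *)

Local Notation "A *t B" := (mxtens.tensmx A B) (at level 40, left associativity).

Lemma tensmx11 (R : pzRingType) m n : 1%:M *t 1%:M = 1%:M :> 'M[R]_(m * n).
Proof.
apply/matrixP=> i j.
case: (mxtens.mxtens_indexP i)=> i1 i2; case: (mxtens.mxtens_indexP j)=> j1 j2.
rewrite mxtens.tensmxE !mxE -natrM; congr (_%:R).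
by rewrite (inj_eq (can_inj (@mxtens.mxtens_indexK _ _))) xpair_eqE mulnb.
Qed.

Section Dagger.
Variable C : numClosedFieldType.

Lemma dagger_tens m n p q (A : 'M[C]_(m, n)) (B : 'M[C]_(p, q)) :
  dagger (A *t B) = dagger A *t dagger B.
Proof. by rewrite /dagger mxtens.trmx_tens mxtens.map_mxT. Qed.

Lemma dagger1 n : dagger (1%:M : 'M[C]_n) = 1%:M.
Proof. by rewrite /dagger trmx1 map_mx1. Qed.

Lemma unitarymx_tens m n p q (A : 'M[C]_(m, n)) (B : 'M[C]_(p, q)) :
  A \is unitarymx -> B \is unitarymx -> A *t B \is unitarymx.
Proof.
move=> /unitarymxP A_unitary /unitarymxP B_unitary; apply/unitarymxP.
change (A *t B *m dagger (A *t B) = 1%:M).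
by rewrite dagger_tens mxtens.tensmx_mul A_unitary B_unitary tensmx11.
Qed.

End Dagger.

Section Channel.
Variables (C : numClosedFieldType) (N : nat).

Lemma ptraceE_kron_scalar (A : 'M[C]_N) c : ptraceE (kron A c%:M) = (c *+ N) *: A.
Proof.
apply/matrixP=> i j; rewrite !mxE.
under eq_bigr do rewrite mxtens.tensmxE !mxE eqxx mulr1n.
by rewrite sumr_const card_ord mulrnAl mulrC.
Qed.

Lemma unistoch_channel_kron1 (V : 'M[C]_N) rho : (0 < N)%N ->
  unistoch_channel (kron V 1%:M) rho = V *m rho *m dagger V.
Proof.
move=> N_gt0; have N_neq0 : (N%:R : C) != 0 by rewrite pnatr_eq0 -lt0n.
rewrite /unistoch_channel /kron dagger_tens dagger1 !mxtens.tensmx_mul.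
rewrite mul1mx mulmx1 scalemx1 ptraceE_kron_scalar.
by rewrite -[X in X *: _]mulr_natr mulVf ?scale1r.
Qed.

Lemma hyperdecE (Phi : 'M[C]_N -> 'M[C]_N) i j :
  hyperdec Phi i j = Phi (proj_ket j) i i.
Proof.
rewrite mxE /mxtrace (bigD1 i) //= big1 ?addr0 => [|k /negbTE k_neq_i].
  rewrite mxE (bigD1 i) //= big1 ?addr0 => [|l /negbTE l_neq_i].
    by rewrite mxE !eqxx mul1r.
  by rewrite mxE l_neq_i andbF mul0r.
by rewrite mxE big1 // => l _; rewrite mxE k_neq_i mul0r.
Qed.

Lemma conj_proj_ket_diag (V : 'M[C]_N) i j :
  (V *m proj_ket j *m dagger V) i i = unistoch_mx V i j.
Proof.
rewrite [RHS]mxE mxE (bigD1 j) //= big1 ?addr0 => [|k /negbTE k_neq_j].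
  rewrite !mxE (bigD1 j) //= big1 ?addr0 => [|l /negbTE l_neq_j].
    by rewrite mxE !eqxx mulr1.
  by rewrite mxE l_neq_j mulr0.
by rewrite mxE big1 ?mul0r // => l _; rewrite mxE k_neq_j andbF mulr0.
Qed.

End Channel.

Theorem proposition9 (C : numClosedFieldType) (N : nat) :
  (2 <= N)%N ->
  forall V : 'M[C]_N, V \is unitarymx ->
  exists U : 'M[C]_(N * N),
    U \is unitarymx /\ unistoch_mx V = hyperdec (unistoch_channel U).
Proof.
move=> N_ge2 V V_unitary; exists (kron V 1%:M); split.
  by apply: unitarymx_tens => //; apply/unitarymxP; rewrite mul1mx; exact: dagger1.
apply/matrixP=> i j.
by rewrite hyperdecE unistoch_channel_kron1 ?conj_proj_ket_diag // ltnW.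
Qed.
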